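(* Let $\mathcal{H}_A,\mathcal{H}_B$ be finite-dimensional Hilbert spaces with a fixed reference basis $\{|i\rangle_A\}_{i=1}^{d_A}$ of $\mathcal{H}_A$, and let $\rho_{AB}=\sum_{i,j}|i\rangle\langle j|_A\otimes\rho^B_{ij}$ be a state. If there exist unitaries $U^B_1,\dots,U^B_{d_A}$ on $\mathcal{H}_B$ (equivalently, a unitary $U_{AB}=\sum_i|i\rangle\langle i|_A\otimes U^B_i$) such that $U^B_i\rho^B_{ij}U^{B\dagger}_j=|\rho^B_{ij}|$ for all $i,j$, then $$C^{A|B}_{\max}(\rho_{AB})=\log\left(1+C^{A|B}_{l_1}(\rho_{AB})\right).$$
   Context: $|P|=\sqrt{P^\dagger P}$ and $\|P\|_{\mathrm{tr}}=\mathrm{Tr}|P|$. $D_{\max}(\rho\|\sigma)=\min\{\lambda\ge0:\rho\leq2^\lambda\sigma\}$. The set $\mathcal{IQ}$ consists of states $\sum_kp_k\sigma^A_k\otimes\tau^B_k$ with $\sigma^A_k$ diagonal in $\{|i\rangle_A\}$ and $\tau^B_k$ arbitrary states; $C^{A|B}_{\max}(\rho_{AB})=\min_{\sigma\in\mathcal{IQ}}D_{\max}(\rho_{AB}\|\sigma)$; $C^{A|B}_{l_1}(\rho_{AB})=\sum_{i\neq j}\|\rho^B_{ij}\|_{\mathrm{tr}}$. Logarithms are base 2. *)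

From HB Require Import structures.
From mathcomp Require Import all_boot all_order all_algebra.
From mathcomp Require Import all_classical all_reals all_analysis.
From mathcomp Require Import complex mxtens.
Set Implicit Arguments. Unset Strict Implicit. Unset Printing Implicit Defensive.
Import Order.TTheory GRing.Theory Num.Theory.
Local Open Scope ring_scope.
Local Open Scope classical_set_scope.

Section Quantum.
Variable R : realType.
Local Notation C := R[i].

Definition mxadj m n (P : 'M[C]_(m, n)) : 'M[C]_(n, m) :=
  (map_mx (@conjc R) P)^T.

(* positive semidefinite: <v|P|v> is a nonnegative real for all v
   (the order on R[i] is: 0 <= z iff z is real and nonnegative) *)
Definition psd n (P : 'M[C]_n) : Prop :=
  forall v : 'cV[C]_n, 0 <= (mxadj v *m P *m v) 0 0.

Definition loewner_le n (P Q : 'M[C]_n) : Prop := psd (Q - P).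

Definition density n (P : 'M[C]_n) : Prop := psd P /\ \tr P = 1.

Definition unitary n (U : 'M[C]_n) : Prop := U *m mxadj U = 1%:M.

(* |P| = sqrt(P^dagger P): the (unique) psd square root of P^dagger P *)
Definition is_mxabs n (P Q : 'M[C]_n) : Prop :=
  psd Q /\ Q *m Q = mxadj P *m P.
Definition mxabs n (P : 'M[C]_n) : 'M[C]_n := xget 0 (is_mxabs P).

Definition trnorm n (P : 'M[C]_n) : R := complex.Re (\tr (mxabs P)).

Definition log2 (x : R) : R := ln x / ln 2.

(* block rho^B_{ij} of rho_AB = sum_{ij} |i><j|_A (x) rho^B_{ij},
   with H_A (x) H_B indexed by mxtens_index (as in tensmx) *)
Definition block dA dB (rho : 'M[C]_(dA * dB)) (i j : 'I_dA) : 'M[C]_dB :=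
  \matrix_(k, l) rho (mxtens_index (i, k)) (mxtens_index (j, l)).

(* incoherent-quantum states:  sum_k p_k sigma^A_k (x) tau^B_k  with
   sigma^A_k diagonal states and tau^B_k states (finite convex combinations) *)
Definition IQ dA dB (sigma : 'M[C]_(dA * dB)) : Prop :=
  exists (K : nat) (p : 'I_K -> R) (sA : 'I_K -> 'M[C]_dA)
         (tB : 'I_K -> 'M[C]_dB),
    [/\ forall k, 0 <= p k,
        \sum_(k < K) p k = 1,
        forall k, density (sA k) /\ is_diag_mx (sA k),
        forall k, density (tB k) &
        sigma = \sum_(k < K) ((p k)%:C)%C *: (sA k *t tB k)].

(* D_max(rho||sigma) = min { l >= 0 : rho <= 2^l sigma }  (+oo if empty) *)
Definition Dmax n (rho sigma : 'M[C]_n) : \bar R :=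
  ereal_inf [set (l%:E)%E | l in
    [set l : R | 0 <= l /\ loewner_le rho (((powR 2 l)%:C)%C *: sigma)]].

Definition Cmax dA dB (rho : 'M[C]_(dA * dB)) : \bar R :=
  ereal_inf [set Dmax rho sigma | sigma in @IQ dA dB].

Definition Cl1 dA dB (rho : 'M[C]_(dA * dB)) : R :=
  \sum_(i < dA) \sum_(j < dA | i != j) trnorm (block rho i j).

End Quantum.

(* Put M_ij := U_i rho_ij U_j^dagger = |rho_ij| and lam := sum_ij Tr M_ij, which is
   1 + C_l1(rho) since sum_i Tr M_ii = Tr rho = 1.  Then lam is the least c such that
   rho <= c sigma for some incoherent-quantum sigma, hence C_max(rho) = log lam.
   Lower bound: for the test vectors v_k := sum_i |i> (x) U_i^dagger |k>, the sum
   sum_k <v_k|X|v_k> equals sum_ij Tr (U_i X_ij U_j^dagger); it is 1 for incoherent-quantum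
   X, whose off-diagonal blocks vanish, and lam for X = rho.
   Upper bound: sigma := lam^-1 sum_i |i><i| (x) U_i^dagger (sum_j M_ij) U_i is
   incoherent-quantum, and with w_i := U_i v_i the form of lam sigma - rho at v is
   sum_ij <w_i|M_ij|w_i> - sum_ij <w_i|M_ij|w_j> = 1/2 sum_ij <w_i - w_j|M_ij|w_i - w_j>,
   which is nonnegative as M_ij is psd and M_ji = M_ij (rho is Hermitian). *)

From HB Require Import structures.
From mathcomp Require Import all_boot all_order all_algebra.
From mathcomp Require Import all_classical all_reals all_analysis.
From mathcomp Require Import complex mxtens.
From mathcomp Require Import ring.
Import Order.TTheory GRing.Theory Num.Theory.
Set Implicit Arguments. Unset Strict Implicit. Unset Printing Implicit Defensive.
Local Open Scope ring_scope.

Lemma is_diag_delta (T : pzSemiRingType) n (i : 'I_n) :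
  is_diag_mx (delta_mx i i : 'M[T]_n).
Proof.
apply/is_diag_mxP => a b; apply: contraNeq; rewrite mxE.
by case: (a =P i) => [-> |]; case: (b =P i) => [-> |]; rewrite ?eqxx.
Qed.

Lemma sum_mxtens_index (V : nmodType) m n (F : 'I_(m * n) -> V) :
  \sum_a F a = \sum_(i < m) \sum_(k < n) F (mxtens_index (i, k)).
Proof.
rewrite pair_big /= (reindex (@mxtens_index m n)) /=; last first.
  by exists (@mxtens_unindex m n) => x _; rewrite (mxtens_indexK, mxtens_unindexK).
by apply: eq_bigr => -[i k] _.
Qed.

Lemma mxtrace_tens (T : pzRingType) m n (A : 'M[T]_m) (B : 'M[T]_n) :
  \tr (A *t B) = \tr A * \tr B.
Proof. by rewrite /mxtrace mulr_sum; apply: eq_bigr => a _; rewrite mxE. Qed.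

Lemma scale_tensmx (T : comPzRingType) m n c (A : 'M[T]_m) (B : 'M[T]_n) :
  c *: (A *t B) = A *t (c *: B).
Proof. by apply/matrixP => a b; rewrite !mxE mulrCA. Qed.

Section QuantumCoherence.
Variable R : realType.
Local Notation C := R[i].

Lemma mxadjE m n (P : 'M[C]_(m, n)) i j : mxadj P i j = (P j i)^*.
Proof. by rewrite /mxadj !mxE. Qed.

Lemma mxadjK m n (P : 'M[C]_(m, n)) : mxadj (mxadj P) = P.
Proof. by apply/matrixP => i j; rewrite !mxadjE conjCK. Qed.

Lemma mxadjM m n p (A : 'M[C]_(m, n)) (B : 'M[C]_(n, p)) :
  mxadj (A *m B) = mxadj B *m mxadj A.
Proof. by rewrite /mxadj map_mxM trmx_mul. Qed.

Lemma mxadjD m n (A B : 'M[C]_(m, n)) : mxadj (A + B) = mxadj A + mxadj B.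
Proof. by apply/matrixP => i j; rewrite !(mxadjE, mxE) rmorphD. Qed.

Lemma mxadjZ m n c (A : 'M[C]_(m, n)) : mxadj (c *: A) = c^* *: mxadj A.
Proof. by apply/matrixP => i j; rewrite !(mxadjE, mxE) rmorphM. Qed.

Lemma mxadj_delta m n (i : 'I_m) (j : 'I_n) :
  mxadj (delta_mx i j) = delta_mx j i :> 'M[C]__.
Proof. by apply/matrixP => a b; rewrite mxadjE !mxE conjC_nat andbC. Qed.

Lemma unitaryC n (U : 'M[C]_n) : unitary U -> mxadj U *m U = 1%:M.
Proof. exact: mulmx1C. Qed.

Lemma mxtrace_unitary_conj n (U A : 'M[C]_n) :
  unitary U -> \tr (U *m A *m mxadj U) = \tr A.
Proof. by move=> U_unitary; rewrite mxtrace_mulC mulmxA unitaryC // mul1mx. Qed.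

Lemma mxtrace_unitary_adjconj n (U A : 'M[C]_n) :
  unitary U -> \tr (mxadj U *m A *m U) = \tr A.
Proof. by move=> U_unitary; rewrite mxtrace_mulC mulmxA U_unitary mul1mx. Qed.

Definition form n (u : 'cV[C]_n) (A : 'M[C]_n) (w : 'cV[C]_n) : C :=
  (mxadj u *m A *m w) 0 0.

Lemma formE n u (A : 'M[C]_n) w :
  form u A w = \sum_a \sum_b (u a 0)^* * A a b * w b 0.
Proof.
rewrite /form mxE; under eq_bigr do rewrite mxE big_distrl.
rewrite exchange_big; apply: eq_bigr => a _; apply: eq_bigr => b _.
by rewrite mxadjE.
Qed.

Section FormLinear.
Variables (n : nat) (A B : 'M[C]_n) (u v w : 'cV[C]_n) (c : C).

Lemma formDl : form (u + v) A w = form u A w + form v A w.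
Proof. by rewrite /form mxadjD !mulmxDl mxE. Qed.
Lemma formDr : form w A (u + v) = form w A u + form w A v.
Proof. by rewrite /form mulmxDr mxE. Qed.
Lemma formZl : form (c *: u) A w = c^* * form u A w.
Proof. by rewrite /form mxadjZ -!scalemxAl mxE. Qed.
Lemma formZr : form w A (c *: u) = c * form w A u.
Proof. by rewrite /form -!scalemxAr mxE. Qed.
Lemma formD : form u (A + B) w = form u A w + form u B w.
Proof. by rewrite /form mulmxDr mulmxDl mxE. Qed.
Lemma formZ : form u (c *: A) w = c * form u A w.
Proof. by rewrite /form -scalemxAr -scalemxAl mxE. Qed.
Lemma form0 : form u 0 w = 0.
Proof. by rewrite /form mulmx0 mul0mx mxE. Qed.

End FormLinear.

Lemma formBl n (A : 'M[C]_n) u v w : form (u - v) A w = form u A w - form v A w.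
Proof. by rewrite -scaleN1r formDl formZl rmorphN1 mulN1r. Qed.
Lemma formBr n (A : 'M[C]_n) u v w : form w A (u - v) = form w A u - form w A v.
Proof. by rewrite -scaleN1r formDr formZr mulN1r. Qed.
Lemma formB n (A B : 'M[C]_n) u w : form u (A - B) w = form u A w - form u B w.
Proof. by rewrite -scaleN1r formD formZ mulN1r. Qed.

Lemma form_sum n I (r : seq I) (F : I -> 'M[C]_n) u w :
  form u (\sum_(i <- r) F i) w = \sum_(i <- r) form u (F i) w.
Proof.
elim: r => [|x r IH]; first by rewrite !big_nil form0.
by rewrite !big_cons formD IH.
Qed.

Lemma form_mulmx n m (X Y : 'M[C]_(n, m)) (P : 'M[C]_n) v w :
  form v (mxadj X *m P *m Y) w = form (X *m v) P (Y *m w).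
Proof. by rewrite /form mxadjM !mulmxA. Qed.

Lemma form_adj n u (A : 'M[C]_n) w : form u (mxadj A) w = (form w A u)^*.
Proof.
rewrite !formE rmorph_sum exchange_big /=; apply: eq_bigr => a _.
rewrite rmorph_sum; apply: eq_bigr => b _.
by rewrite !rmorphM mxadjE /= conjCK mulrC mulrA mulrAC.
Qed.

Lemma form_delta n (A : 'M[C]_n) a b :
  form (delta_mx a 0) A (delta_mx b 0) = A a b.
Proof.
rewrite formE (bigD1 a) //= [X in _ + X]big1 ?addr0 => [|a' /negbTE a'a]; last first.
  by rewrite big1 // => b' _; rewrite mxE a'a andFb conjC0 !mul0r.
rewrite (bigD1 b) //= [X in _ + X]big1 ?addr0 => [|b' /negbTE b'b]; last first.
  by rewrite [delta_mx b 0 b' 0]mxE b'b andFb mulr0.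
by rewrite !mxE !eqxx andTb conjC1 mul1r mulr1.
Qed.

Lemma form_pair n (A : 'M[C]_n) a b c :
  form (delta_mx a 0 + c *: delta_mx b 0) A (delta_mx a 0 + c *: delta_mx b 0) =
  A a a + c * A a b + c^* * A b a + c^* * c * A b b.
Proof.
by rewrite !(formDl, formDr, formZl, formZr) !form_delta mulrDr mulrA !addrA.
Qed.

Lemma form_eq0 n (A : 'M[C]_n) : (forall v, form v A v = 0) -> A = 0.
Proof.
move=> A0; apply/matrixP => a b; rewrite mxE.
have Add d : A d d = 0 by rewrite -form_delta A0.
have offdiag c : c * A a b + c^* * A b a = 0.
  have := A0 (delta_mx a 0 + c *: delta_mx b 0).
  by rewrite form_pair !Add !(mulr0, addr0, add0r).
have Aba : A b a = A a b.
  apply: (mulfI (neq0Ci C)); apply/eqP; rewrite -subr_eq0 -oppr_eq0 opprB.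
  by have := offdiag 'i%R; rewrite conjCi mulNr => ->.
have := offdiag 1; rewrite conjC1 !mul1r Aba -mulr2n => /eqP.
by rewrite mulrn_eq0 => /eqP.
Qed.

Lemma psd_adj n (P : 'M[C]_n) : psd P -> mxadj P = P.
Proof.
move=> P_psd; apply/eqP; rewrite -subr_eq0; apply/eqP/form_eq0 => v.
by rewrite formB form_adj geC0_conj ?subrr //; apply: P_psd.
Qed.

Lemma psd_diag_ge0 n (P : 'M[C]_n) a : psd P -> 0 <= P a a.
Proof. by move=> P_psd; rewrite -form_delta; apply: P_psd. Qed.

Lemma psd_tr_ge0 n (P : 'M[C]_n) : psd P -> 0 <= \tr P.
Proof. by move=> P_psd; apply: sumr_ge0 => a _; apply: psd_diag_ge0. Qed.

Lemma psd_trE n (P : 'M[C]_n) : psd P -> \tr P = (complex.Re (\tr P))%:C%C.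
Proof. by move=> P_psd; rewrite RRe_real // ger0_real // psd_tr_ge0. Qed.

Lemma psd_tr_eq0 n (P : 'M[C]_n) : psd P -> \tr P = 0 -> P = 0.
Proof.
move=> P_psd /eqP; rewrite psumr_eq0 => [/allP P_diag0|a _]; last exact: psd_diag_ge0.
have Pdd a : P a a = 0 by apply/eqP/P_diag0; rewrite mem_index_enum.
apply/matrixP => b a; rewrite mxE; set z := P b a.
(* at e_a - z e_b the form is -2 |z|^2 *)
have := P_psd (delta_mx a 0 + (- z) *: delta_mx b 0).
rewrite -/(form _ P _) form_pair !Pdd mulr0 addr0 add0r.
have -> : P a b = z^* by rewrite -[in LHS](psd_adj P_psd) mxadjE.
rewrite rmorphN /= !mulNr -opprD.
rewrite [X in _ + X]mulrC -mulr2n oppr_ge0 pmulrn_lle0 // => zz_le0.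
have /eqP : z * z^* = 0 by apply/eqP; rewrite eq_le zz_le0 mul_conjC_ge0.
by rewrite mulf_eq0 conjC_eq0 orbb => /eqP.
Qed.

Lemma psd0 n : psd (0 : 'M[C]_n).
Proof. by move=> v; rewrite -/(form v 0 v) form0. Qed.

Lemma psdD n (A B : 'M[C]_n) : psd A -> psd B -> psd (A + B).
Proof.
move=> A_psd B_psd v; rewrite -/(form v _ v) formD.
exact: addr_ge0 (A_psd v) (B_psd v).
Qed.

Lemma psdZ n c (A : 'M[C]_n) : 0 <= c -> psd A -> psd (c *: A).
Proof.
move=> c_ge0 A_psd v; rewrite -/(form v _ v) formZ.
exact: mulr_ge0 c_ge0 (A_psd v).
Qed.

Lemma psd_sum n I (r : seq I) (F : I -> 'M[C]_n) :
  (forall i, psd (F i)) -> psd (\sum_(i <- r) F i).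
Proof.
move=> F_psd; elim: r => [|x r IH]; first by rewrite big_nil; apply: psd0.
by rewrite big_cons; apply: psdD.
Qed.

Lemma psd_mulmx n m (X : 'M[C]_(n, m)) (P : 'M[C]_n) :
  psd P -> psd (mxadj X *m P *m X).
Proof. by move=> P_psd v; rewrite -/(form v _ v) form_mulmx; apply: P_psd. Qed.

Lemma psd1 n : psd (1%:M : 'M[C]_n).
Proof.
move=> v; rewrite -/(form v _ v) /form mulmx1 mxE; apply: sumr_ge0 => a _.
by rewrite mxadjE mulrC mul_conjC_ge0.
Qed.

Lemma psd_delta n (i : 'I_n) : psd (delta_mx i i : 'M[C]_n).
Proof.
have -> : delta_mx i i = mxadj (delta_mx 0 i : 'M[C]_(1, n)) *m 1%:M *m delta_mx 0 i.
  by rewrite mulmx1 mxadj_delta mul_delta_mx.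
exact/psd_mulmx/psd1.
Qed.

Lemma density_delta n (i : 'I_n) : density (delta_mx i i : 'M[C]_n).
Proof.
split; first exact: psd_delta.
rewrite /mxtrace (bigD1 i) //= big1 ?addr0 => [|j /negbTE ji]; first by rewrite mxE !eqxx.
by rewrite mxE ji.
Qed.

Lemma mxabs_psd n (P : 'M[C]_n) : psd (mxabs P).
Proof.
rewrite /mxabs; case: (pselect (exists Q, is_mxabs P Q)) => [|no_abs].
  by case/(xgetPex 0).
by rewrite xgetPN; [exact: psd0 | move=> Q PQ; apply: no_abs; exists Q].
Qed.

Lemma trnorm_ge0 n (P : 'M[C]_n) : 0 <= trnorm P.
Proof. by have := psd_tr_ge0 (mxabs_psd P); rewrite lecE => /andP[]. Qed.

Lemma Cl1_ge0 dA dB (rho : 'M[C]_(dA * dB)) : 0 <= Cl1 rho.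
Proof. by apply: sumr_ge0 => i _; apply: sumr_ge0 => j _; apply: trnorm_ge0. Qed.

Lemma density_dim_gt0 n (P : 'M[C]_n) : density P -> (0 < n)%N.
Proof.
case: n P => // P [_]; rewrite /mxtrace big_ord0 => /eqP.
by rewrite eq_sym oner_eq0.
Qed.

Definition vblock m n (v : 'cV[C]_(m * n)) (i : 'I_m) : 'cV[C]_n :=
  \col_k v (mxtens_index (i, k)) 0.

Definition vstack m n (w : 'I_m -> 'cV[C]_n) : 'cV[C]_(m * n) :=
  \col_a w (mxtens_unindex a).1 (mxtens_unindex a).2 0.

Lemma vblock_stack m n (w : 'I_m -> 'cV[C]_n) i : vblock (vstack w) i = w i.
Proof. by apply/matrixP => k z; rewrite !mxE mxtens_indexK (ord1 z). Qed.

Lemma form_block m n u (X : 'M[C]_(m * n)) w :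
  form u X w = \sum_i \sum_j form (vblock u i) (block X i j) (vblock w j).
Proof.
rewrite formE; under eq_bigr do rewrite sum_mxtens_index.
rewrite sum_mxtens_index; apply: eq_bigr => i _.
under [RHS]eq_bigr do rewrite formE.
rewrite exchange_big; apply: eq_bigr => j _; apply: eq_bigr => k _.
by apply: eq_bigr => l _; rewrite !mxE.
Qed.

Lemma block_sum m n I (r : seq I) (F : I -> 'M[C]_(m * n)) i j :
  block (\sum_(k <- r) F k) i j = \sum_(k <- r) block (F k) i j.
Proof.
by apply/matrixP => a b; rewrite !(mxE, summxE); apply: eq_bigr => k _; rewrite mxE.
Qed.

Lemma blockZ m n c (X : 'M[C]_(m * n)) i j : block (c *: X) i j = c *: block X i j.
Proof. by apply/matrixP => a b; rewrite !mxE. Qed.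

Lemma block_tens m n (A : 'M[C]_m) (B : 'M[C]_n) i j : block (A *t B) i j = A i j *: B.
Proof. by apply/matrixP => k l; rewrite !mxE !mxtens_indexK. Qed.

Lemma block_diag_tens m n (E : 'I_m -> 'M[C]_n) i j :
  block (\sum_l delta_mx l l *t E l) i j = (i == j)%:R *: E i.
Proof.
rewrite block_sum (bigD1 i) //= big1 => [|l li]; last first.
  by rewrite block_tens mxE eq_sym (negbTE li) scale0r.
by rewrite block_tens mxE eqxx eq_sym addr0.
Qed.

Lemma block_adj m n (X : 'M[C]_(m * n)) i j : block (mxadj X) i j = mxadj (block X j i).
Proof. by apply/matrixP => k l; rewrite mxadjE !mxE. Qed.

Lemma mxtrace_block m n (X : 'M[C]_(m * n)) : \tr X = \sum_i \tr (block X i i).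
Proof.
rewrite /mxtrace sum_mxtens_index; apply: eq_bigr => i _.
by apply: eq_bigr => k _; rewrite mxE.
Qed.

Section IncoherentQuantum.
Variables (dA dB : nat) (sigma : 'M[C]_(dA * dB)).
Hypothesis sigma_IQ : IQ sigma.

Lemma IQ_block_offdiag i j : i != j -> block sigma i j = 0.
Proof.
move: sigma_IQ => [K [p [sA [tB [_ _ sA_diag _ ->]]]]] ij.
rewrite block_sum big1 // => k _; have /is_diag_mxP sA_offdiag := (sA_diag k).2.
by rewrite blockZ block_tens sA_offdiag // scale0r scaler0.
Qed.

Lemma IQ_tr : \tr sigma = 1.
Proof.
move: sigma_IQ => [K [p [sA [tB [_ p_sum1 sA_state tB_state ->]]]]].
rewrite raddf_sum /=.
under eq_bigr do rewrite mxtraceZ mxtrace_tens (sA_state _).1.2 (tB_state _).2 !mulr1.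
by rewrite -rmorph_sum p_sum1.
Qed.

End IncoherentQuantum.

Lemma IQ_blockdiag dA dB (k0 : 'I_dB) (E : 'I_dA -> 'M[C]_dB) (lam : R) :
  (forall i, psd (E i)) -> 0 < lam -> \sum_i complex.Re (\tr (E i)) = lam ->
  exists2 sigma, IQ sigma & lam%:C%C *: sigma = \sum_i delta_mx i i *t E i.
Proof.
move=> E_psd lam_gt0 trE_sum.
pose t i := complex.Re (\tr (E i)).
have t_ge0 i : 0 <= t i by have := psd_tr_ge0 (E_psd i); rewrite lecE => /andP[].
have trE i : \tr (E i) = (t i)%:C%C by apply: psd_trE.
pose tau i := if t i == 0 then delta_mx k0 k0 else (t i)^-1%:C%C *: E i.
have tauE i : (t i)%:C%C *: tau i = E i.
  rewrite /tau; case: eqP => [t0|/eqP t_neq0].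
    by rewrite t0 scale0r; symmetry; apply: psd_tr_eq0; rewrite ?trE ?t0.
  by rewrite scalerA -rmorphM /= divff // scale1r.
have tau_state i : density (tau i).
  rewrite /tau; case: eqP => [_|/eqP t_neq0]; first exact: density_delta.
  split; first by apply: psdZ; rewrite ?ler0c ?invr_ge0.
  by rewrite mxtraceZ trE -rmorphM /= mulVf.
exists (\sum_i (t i / lam)%:C%C *: (delta_mx i i *t tau i)).
  exists dA, (fun i => t i / lam), (fun i => delta_mx i i), tau; split => //.
  - by move=> i; rewrite divr_ge0 // ltW.
  - by rewrite -mulr_suml trE_sum divff // gt_eqF.
  - by move=> i; split; [exact: density_delta | exact: is_diag_delta].
rewrite scaler_sumr; apply: eq_bigr => i _.
by rewrite scalerA -rmorphM /= mulrC divfK ?gt_eqF // scale_tensmx tauE.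
Qed.

Lemma sum_form_le_diag m n (M : 'I_m -> 'I_m -> 'M[C]_n) (u : 'I_m -> 'cV[C]_n) :
  (forall i j, psd (M i j)) -> (forall i j, M j i = M i j) ->
  \sum_i \sum_j form (u i) (M i j) (u j) <= \sum_i \sum_j form (u i) (M i j) (u i).
Proof.
move=> M_psd M_sym; rewrite -subr_ge0.
set diag := \sum_i \sum_j _; set off := \sum_i \sum_j _.
(* by the symmetry of M, summing the forms at u i - u j counts diag - off twice *)
have sum_diff : \sum_i \sum_j form (u i - u j) (M i j) (u i - u j) = (diag - off) *+ 2.
  have split_diff i j : form (u i - u j) (M i j) (u i - u j) =
      (form (u i) (M i j) (u i) - form (u i) (M i j) (u j)) +
      (form (u j) (M j i) (u j) - form (u j) (M j i) (u i)).
    by rewrite M_sym !(formBl, formBr); ring.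
  under eq_bigr do under eq_bigr do rewrite split_diff.
  under eq_bigr do rewrite big_split /=.
  rewrite big_split /= [X in _ + X]exchange_big /=.
  rewrite -mulr2n /diag /off -sumrB; congr (_ *+ 2).
  by apply: eq_bigr => i _; rewrite sumrB.
rewrite -(pmulrn_lge0 (diag - off) (ltn0Sn 1)) -sum_diff.
by apply: sumr_ge0 => i _; apply: sumr_ge0 => j _; apply: M_psd.
Qed.

Section BlockUnitary.
Variables (dA dB : nat) (U : 'I_dA -> 'M[C]_dB).

Let ublock (X : 'M[C]_(dA * dB)) i j := U i *m block X i j *m mxadj (U j).

Let v (k : 'I_dB) := vstack (fun i => mxadj (U i) *m delta_mx k 0).

Lemma sum_form_ublock (X : 'M[C]_(dA * dB)) :
  \sum_k form (v k) X (v k) = \sum_i \sum_j \tr (ublock X i j).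
Proof.
under eq_bigr do rewrite form_block.
under eq_bigr do under eq_bigr do under eq_bigr do
  rewrite !vblock_stack -form_mulmx mxadjK form_delta.
by rewrite exchange_big; apply: eq_bigr => i _; rewrite exchange_big.
Qed.

Hypothesis U_unitary : forall i, unitary (U i).

Lemma sum_tr_ublock_diag X : \sum_i \tr (ublock X i i) = \tr X.
Proof.
by rewrite mxtrace_block; apply: eq_bigr => i _; apply: mxtrace_unitary_conj.
Qed.

Lemma sum_tr_ublock_IQ sigma : IQ sigma -> \sum_i \sum_j \tr (ublock sigma i j) = 1.
Proof.
move=> sigma_IQ; rewrite -(IQ_tr sigma_IQ) -sum_tr_ublock_diag.
apply: eq_bigr => i _; rewrite (bigD1 i) //= big1 ?addr0 // => j ji.
by rewrite /ublock IQ_block_offdiag 1?eq_sym // mulmx0 mul0mx mxtrace0.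
Qed.

Variable rho : 'M[C]_(dA * dB).
Let lam := \sum_i \sum_j complex.Re (\tr (ublock rho i j)).

Lemma IQ_lower_bound sigma c :
  IQ sigma -> loewner_le rho (c%:C%C *: sigma) -> lam <= c.
Proof.
move=> sigma_IQ rho_le.
have : 0 <= \sum_k form (v k) (c%:C%C *: sigma - rho) (v k).
  by apply: sumr_ge0 => k _; apply: rho_le.
under eq_bigr do rewrite formB formZ.
rewrite sumrB -mulr_sumr !sum_form_ublock sum_tr_ublock_IQ // mulr1 subr_ge0.
rewrite lecE => /andP[_] /=; rewrite raddf_sum /lam => le_c.
by apply: le_trans le_c; apply: ler_sum => i _; rewrite raddf_sum.
Qed.

Hypotheses (ublock_psd : forall i j, psd (ublock rho i j))
           (ublock_sym : forall i j, ublock rho j i = ublock rho i j).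

Lemma IQ_upper_bound (k0 : 'I_dB) : 0 < lam ->
  exists2 sigma, IQ sigma & loewner_le rho (lam%:C%C *: sigma).
Proof.
move=> lam_gt0.
pose E i := mxadj (U i) *m (\sum_j ublock rho i j) *m U i.
have E_psd i : psd (E i) by apply/psd_mulmx/psd_sum.
have trE : \sum_i complex.Re (\tr (E i)) = lam.
  apply: eq_bigr => i _.
  by rewrite mxtrace_unitary_adjconj // [\tr _]raddf_sum raddf_sum.
have [sigma sigma_IQ sigmaE] := IQ_blockdiag k0 E_psd lam_gt0 trE.
exists sigma => // x; rewrite -/(form x _ x) sigmaE formB !form_block.
pose w i := U i *m vblock x i.
have -> : \sum_i \sum_j form (vblock x i) (block (\sum_l delta_mx l l *t E l) i j)
                                          (vblock x j) =
          \sum_i \sum_j form (w i) (ublock rho i j) (w i).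
  apply: eq_bigr => i _; rewrite (bigD1 i) //= [X in _ + X]big1 ?addr0 => [|j ji].
    by rewrite block_diag_tens eqxx scale1r form_mulmx form_sum.
  by rewrite block_diag_tens eq_sym (negbTE ji) scale0r form0.
have -> : \sum_i \sum_j form (vblock x i) (block rho i j) (vblock x j) =
          \sum_i \sum_j form (w i) (ublock rho i j) (w j).
  apply: eq_bigr => i _; apply: eq_bigr => j _.
  by rewrite -form_mulmx !mulmxA unitaryC // mul1mx -mulmxA unitaryC // mulmx1.
by rewrite subr_ge0; apply: sum_form_le_diag.
Qed.

End BlockUnitary.

End QuantumCoherence.

Section MaxRelativeEntropy.
Variable R : realType.
Local Notation C := R[i].

Lemma powR2_log2 (x : R) : 0 < x -> powR 2 (log2 x) = x.
Proof.
move=> x_gt0; rewrite /powR pnatr_eq0 /log2 divfK ?lnK ?posrE //.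
by rewrite gt_eqF // ln_gt0 // ltr1n.
Qed.

Lemma log2_ge0 (x : R) : 1 <= x -> 0 <= log2 x.
Proof. by move=> x_ge1; rewrite divr_ge0 ?ln_ge0 ?ler1n. Qed.

Lemma Dmax_le_log2 n (rho sigma : 'M[C]_n) lam :
  1 <= lam -> loewner_le rho (lam%:C%C *: sigma) ->
  (Dmax rho sigma <= (log2 lam)%:E)%E.
Proof.
move=> lam_ge1 rho_le; apply: ge_ereal_inf; exists (log2 lam)%:E%E => //.
exists (log2 lam) => //; split; first exact: log2_ge0.
by rewrite powR2_log2 // (lt_le_trans ltr01).
Qed.

Lemma log2_le_Dmax n (rho sigma : 'M[C]_n) lam : 0 < lam ->
  (forall c, loewner_le rho (c%:C%C *: sigma) -> lam <= c) ->
  ((log2 lam)%:E <= Dmax rho sigma)%E.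
Proof.
move=> lam_gt0 lam_le; apply/ereal_infP => _ [l [_ rho_le] <-].
rewrite lee_fin /log2 ler_pdivrMr ?ln_gt0 ?ltr1n // -ln_powR.
by rewrite ler_ln ?posrE ?powR_gt0 //; apply: lam_le.
Qed.

Lemma Cmax_eq_log2 dA dB (rho : 'M[C]_(dA * dB)) lam : 1 <= lam ->
  (forall sigma c, IQ sigma -> loewner_le rho (c%:C%C *: sigma) -> lam <= c) ->
  (exists2 sigma, IQ sigma & loewner_le rho (lam%:C%C *: sigma)) ->
  Cmax rho = (log2 lam)%:E%E.
Proof.
move=> lam_ge1 lower [sigma sigma_IQ rho_le].
apply/eqP; rewrite eq_le; apply/andP; split.
  apply: ge_ereal_inf; exists (Dmax rho sigma); first by exists sigma.
  exact: Dmax_le_log2.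
apply/ereal_infP => _ [s s_IQ <-].
by apply: log2_le_Dmax => [|c]; [exact: lt_le_trans ltr01 lam_ge1 | apply: lower].
Qed.

End MaxRelativeEntropy.

Unset Implicit Arguments.
Set Strict Implicit.

Theorem proposition9 (R : realType) (dA dB : nat)
    (rho : 'M[R[i]]_(dA * dB)) (U : 'I_dA -> 'M[R[i]]_dB) :
  density rho ->
  (forall i, unitary (U i)) ->
  (forall i j, U i *m block rho i j *m mxadj (U j) = mxabs (block rho i j)) ->
  Cmax rho = ((log2 (1 + Cl1 rho))%:E)%E.
Proof.
move=> rho_state U_unitary rho_abs; have [rho_psd rho_tr1] := rho_state.
set M := fun i j => U i *m block rho i j *m mxadj (U j).
have M_psd i j : psd (M i j) by rewrite /M rho_abs; apply: mxabs_psd.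
have M_sym i j : M j i = M i j.
  rewrite -[M i j](psd_adj (M_psd i j)) /M -[in LHS](psd_adj rho_psd).
  by rewrite block_adj !mxadjM mxadjK !mulmxA.
set lam := \sum_i \sum_j complex.Re (\tr (M i j)).
have lamE : lam = 1 + Cl1 rho.
  rewrite /lam; under eq_bigr => i _ do rewrite (bigD1 i) //=.
  rewrite big_split /= -raddf_sum sum_tr_ublock_diag // rho_tr1; congr (_ + _).
  by apply: eq_bigr => i _; apply: eq_big => [j|j _]; rewrite 1?eq_sym // /M rho_abs.
have lam_ge1 : 1 <= lam by rewrite lamE lerDl Cl1_ge0.
have /andP[_ dB_gt0] : ((0 < dA) && (0 < dB))%N.
  by rewrite -muln_gt0 (density_dim_gt0 rho_state).
rewrite -lamE; apply: Cmax_eq_log2 => // [sigma c|]; first exact: IQ_lower_bound.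
exact: (IQ_upper_bound U_unitary M_psd M_sym (Ordinal dB_gt0) (lt_le_trans ltr01 lam_ge1)).
Qed.
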